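(* Consider a unit-demand buyer with value distribution $\mathcal{D}$ over $m$ items, a deterministic item pricing $p\in\mathbb{R}_+^m$, and a random set $S\subseteq[m]$ of available items (independent of the buyer's value). Let $x^*=\mathbb{E}_S[\mathbf{x}_{p,S}]$. Then for every $y\in\Delta_m$ with $y\preceq x^*$ there exists a random item pricing $q$ (independent of $S$ and of the buyer's value) such that $$\mathbb{E}_{q,S}[\mathbf{x}_{q,S}]=y\quad\text{and}\quad \mathbb{E}_{q,S}[\textsc{Rev}_{q,S}]=y\cdot p.$$
   Context: Unit-demand buyer: valuation $v$ with $v_j\ge0$ per item, $v(S)=\max_{j\in S}v_j$; $\mathcal{D}$ arbitrary. $\Delta_m=\{\lambda\in[0,1]^m:\sum_j\lambda_j\le1\}$. An item pricing is a vector $p\in(\mathbb{R}_+\cup\{\infty\})^m$; when the set of available items is $S$, the buyer purchases an item $j\in S$ maximizing $v_j-p_j$ if this maximum is nonnegative (otherwise nothing) and pays $p_j$. $\mathbf{x}_{p,S}\in\Delta_m$ is the vector whose $j$-th entry is the probability over $v\sim\mathcal{D}$ that item $j$ is purchased under pricing $p$ with available set $S$, and $\textsc{Rev}_{p,S}$ the corresponding expected payment. A random item pricing is a distribution over item pricings; expectations are also taken over its randomness. $y\preceq x$ means $y_j\le x_j$ for all $j$. *)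

From HB Require Import structures.
From mathcomp Require Import all_boot all_order all_algebra.
From mathcomp Require Import all_classical all_reals all_analysis.
Set Implicit Arguments. Unset Strict Implicit. Unset Printing Implicit Defensive.
Import Order.TTheory GRing.Theory Num.Theory.
Local Open Scope classical_set_scope.
Local Open Scope ring_scope.

(* An item pricing on m items: a price in [0, +oo] (as an extended real)
   for each item; +oo means "effectively unavailable". *)
Definition pricing (R : realType) (m : nat) := 'I_m -> \bar R.

Definition is_pricing (R : realType) (m : nat) (p : pricing R m) : Prop :=
  forall j, (0 <= p j)%E.

(* Unit-demand buyer with valuation v, item pricing p, available set S:
   the buyer buys item j iff j is available, its utility v_j - p_j is
   nonnegative and maximal among available items; ties are broken in
   favour of the smallest index (fixed deterministic tie-breaking rule). *)
Definition buys (R : realType) (m : nat) (v : 'I_m -> R) (p : pricing R m)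
    (S : {set 'I_m}) (j : 'I_m) : bool :=
  [&& j \in S,
      (0 <= (v j)%:E - p j)%E,
      [forall k in S, ((v k)%:E - p k <= (v j)%:E - p j)%E] &
      [forall k in S, (k < j)%N ==> ((v k)%:E - p k < (v j)%:E - p j)%E]].

(* x_{p,S}: purchase probability of item j, the buyer's valuation being the
   random variable v on the probability space (Omega, P) (its law is D). *)
Definition xprob (R : realType) (d : measure_display) (Omega : measurableType d)
    (P : probability Omega R) (m : nat) (v : Omega -> 'I_m -> R)
    (p : pricing R m) (S : {set 'I_m}) (j : 'I_m) : R :=
  fine (P [set w | buys (v w) p S j]).

Definition payment (R : realType) (m : nat) (vw : 'I_m -> R) (p : pricing R m)
    (S : {set 'I_m}) : R :=
  \sum_(j < m) (if buys vw p S j then fine (p j) else 0).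

Definition Rev (R : realType) (d : measure_display) (Omega : measurableType d)
    (P : probability Omega R) (m : nat) (v : Omega -> 'I_m -> R)
    (p : pricing R m) (S : {set 'I_m}) : R :=
  fine (\int[P]_w (payment (v w) p S)%:E)%E.

From mathcomp Require Import all_boot all_order all_algebra.
From mathcomp Require Import all_classical all_reals all_analysis.
From mathcomp Require Import measurable_realfun.
From mathcomp Require Import lra.
Set Implicit Arguments. Unset Strict Implicit. Unset Printing Implicit Defensive.
Import Order.TTheory GRing.Theory Num.Theory.
Local Open Scope classical_set_scope.
Local Open Scope ring_scope.

(* For T a set of items let p_T price the items of T at p and the others at
   +oo, and let f T := E_S[x_{p_T,S}].  Then f T vanishes off T, and shrinking T
   (pricing more items out) can only raise the purchase probability of the
   items that remain.  These two facts alone imply, by peeling off one item at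
   a time, that every y with 0 <= y <= f [m] = x* is a convex combination of
   the f T.  Mixing the pricings p_T with these weights has allocation y, and
   since p_T charges p_j whenever it sells j, its revenue is p times its
   allocation, which gives revenue y . p. *)

Section ConvexHull.
Variables (R : realFieldType) (I : finType) (f : {set I} -> I -> R).

Definition in_convex_hull (z : I -> R) : Prop :=
  exists w : {set I} -> R, [/\ forall T, 0 <= w T, \sum_T w T = 1
                            & forall j, \sum_T w T * f T j = z j].

Lemma in_convex_hull_vertex U : in_convex_hull (f U).
Proof.
exists (fun T => (T == U)%:R); split=> [T||j]; first by rewrite ler0n.
  by rewrite (bigD1 U) //= eqxx big1 ?addr0 // => T /negbTE ->.
rewrite (bigD1 U) //= eqxx mul1r big1 ?addr0 // => T /negbTE ->.
by rewrite mul0r.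
Qed.

Lemma in_convex_hull_combine t U z :
  0 <= t <= 1 -> in_convex_hull z ->
  in_convex_hull (fun j => t * f U j + (1 - t) * z j).
Proof.
case/andP=> t_ge0 t_le1 [w [w_ge0 w_sum1 wz]].
have t'_ge0 : 0 <= 1 - t by rewrite subr_ge0.
exists (fun T => t * (T == U)%:R + (1 - t) * w T); split=> [T||j].
- by rewrite addr_ge0 ?mulr_ge0 ?ler0n.
- rewrite big_split /= -!mulr_sumr w_sum1 (bigD1 U) //= eqxx big1 ?addr0.
    by rewrite mulr1 mulr1 addrC subrK.
  by move=> T /negbTE ->.
under eq_bigr do rewrite mulrDl -!mulrA.
rewrite big_split /= -!mulr_sumr wz (bigD1 U) //= eqxx mul1r big1 ?addr0 //.
by move=> T /negbTE ->; rewrite mul0r.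
Qed.

Hypothesis f_ge0 : forall T j, 0 <= f T j.
Hypothesis f_notin : forall (T : {set I}) j, j \notin T -> f T j = 0.
Hypothesis f_anti :
  forall (T T' : {set I}) j, T \subset T' -> j \in T -> f T' j <= f T j.

Lemma dominated_eq0 U z j :
  0 <= z j <= f U j -> j \notin U -> z j = 0.
Proof.
by move=> /andP[z_ge0 +] jNU; rewrite f_notin // => z_le0; apply/le_anti/andP.
Qed.

(* Take the largest t with t * f U <= z; the ratio z / f U attains it at some
   k in U, so the residual (z - t f U) / (1 - t) vanishes at k. *)
Lemma dominated_peel U z k0 :
  (forall j, 0 <= z j <= f U j) -> z k0 < f U k0 ->
  exists k t z', [/\ k \in U, 0 <= t < 1,
    forall j, 0 <= z' j <= f (U :\ k) j
    & z = fun j => t * f U j + (1 - t) * z' j].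
Proof.
move=> z_dom lt_k0.
have fU_k0 : 0 < f U k0 by case/andP: (z_dom k0) => /le_lt_trans->.
have [k fU_k min_k] :=
  @arg_minP _ _ _ k0 (fun j => 0 < f U j) (fun j => z j / f U j) fU_k0.
set t := z k / f U k.
have kU : k \in U by apply: contraTT fU_k => /f_notin->; rewrite ltxx.
have tfU_le j : t * f U j <= z j.
  have [fU_j|] := ltrP 0 (f U j); first by rewrite -ler_pdivlMr // min_k.
  move=> fU_j_le0; have -> : f U j = 0 by apply/le_anti; rewrite fU_j_le0 f_ge0.
  by rewrite mulr0; case/andP: (z_dom j).
have t_ge0 : 0 <= t.
  by apply: divr_ge0; [case/andP: (z_dom k) | exact: ltW].
have t_lt1 : t < 1.
  by rewrite (le_lt_trans (min_k k0 fU_k0)) // ltr_pdivrMr // mul1r.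
have t'_gt0 : 0 < 1 - t by rewrite subr_gt0.
exists k, t, (fun j => (z j - t * f U j) / (1 - t)).
split=> //; first by rewrite t_ge0.
- move=> j; apply/andP; split.
    by apply: divr_ge0; rewrite ?subr_ge0 ?tfU_le ?ltW.
  have [jU|jNU] := boolP (j \in U); last first.
    by rewrite (dominated_eq0 (z_dom j)) // f_notin // mulr0 subrr mul0r.
  have [->|jk] := eqVneq j k; first by rewrite divfK ?gt_eqF // subrr mul0r.
  have jUk : j \in U :\ k by rewrite !inE jk.
  have le_fU := f_anti (subsetDl U [set k]) jUk.
  rewrite ler_pdivrMr // (le_trans _ (ler_wpM2r (ltW t'_gt0) le_fU)) //.
  by case/andP: (z_dom j) => _ z_le; nra.
by apply/funext => j; rewrite [(1 - t) * _]mulrC divfK ?gt_eqF // addrC subrK.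
Qed.

Lemma dominated_in_convex_hull U z :
  (forall j, 0 <= z j <= f U j) -> in_convex_hull z.
Proof.
have [n] := ubnP #|U|; elim: n => // n IH in U z *; rewrite ltnS => le_Un z_dom.
have [/existsP[k0 lt_k0]|/existsPn z_ge] := boolP [exists k, z k < f U k].
  have [k [t [z' [kU t01 z'_dom ->]]]] := dominated_peel z_dom lt_k0.
  apply: in_convex_hull_combine; first by case/andP: t01 => -> /ltW->.
  by apply: IH z'_dom; rewrite (cardsD1 k U) kU in le_Un.
suff -> : z = f U by apply: in_convex_hull_vertex.
apply/funext => j; apply/le_anti; case/andP: (z_dom j) => _ ->.
by rewrite leNgt z_ge.
Qed.

End ConvexHull.

Section RestrictPricing.
Variables (R : realType) (m : nat) (p : 'I_m -> R).

Definition restrict_pricing (T : {set 'I_m}) : pricing R m :=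
  fun i => if i \in T then (p i)%:E else +oo%E.

Lemma restrict_pricingT : restrict_pricing [set: 'I_m]%SET = fun i => (p i)%:E.
Proof. by apply/funext => i; rewrite /restrict_pricing finset.in_setT. Qed.

Lemma is_pricing_restrict T :
  (forall j, 0 <= p j) -> is_pricing (restrict_pricing T).
Proof.
by move=> p_ge0 j; rewrite /restrict_pricing; case: ifP; rewrite ?lee_fin ?leey.
Qed.

Lemma buys_restrict_mem (vw : 'I_m -> R) (T S : {set 'I_m}) j :
  buys vw (restrict_pricing T) S j -> j \in T.
Proof. by case/and4P=> _; rewrite /restrict_pricing; case: ifP. Qed.

(* Pricing more items at +oo only lowers their utilities, so j remains the
   first utility maximiser among the available items. *)
Lemma buys_restrict_sub (vw : 'I_m -> R) (T T' S : {set 'I_m}) j :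
  T \subset T' -> j \in T ->
  buys vw (restrict_pricing T') S j -> buys vw (restrict_pricing T) S j.
Proof.
move=> /fintype.subsetP sTT' jT.
case/and4P=> jS u_ge0 /forall_inP u_max /forall_inP u_first.
have jT' := sTT' j jT.
have u_le k : ((vw k)%:E - restrict_pricing T k
               <= (vw k)%:E - restrict_pricing T' k)%E.
  rewrite /restrict_pricing; case: (boolP (k \in T)) => [/sTT'->//|_].
  by rewrite leNye.
apply/and4P; split=> //; first by move: u_ge0; rewrite /restrict_pricing jT jT'.
- apply/forall_inP => k kS; rewrite (le_trans (u_le k)) //.
  by move: (u_max k kS); rewrite /restrict_pricing jT jT'.
- apply/forall_inP => k kS; apply/implyP => ltkj.
  rewrite (le_lt_trans (u_le k)) //.
  by move: (implyP (u_first k kS) ltkj); rewrite /restrict_pricing jT jT'.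
Qed.

End RestrictPricing.

Lemma measurable_fun_forall_in d (T : measurableType d) (I : finType)
    (A : {pred I}) (P : I -> T -> bool) :
  (forall k, measurable_fun setT (P k)) ->
  measurable_fun setT (fun w => [forall k in A, P k w]).
Proof.
move=> mP.
have -> : (fun w => [forall k in A, P k w]) = fun w => all (P^~ w) (enum A).
  apply/funext => w; apply/forall_inP/allP => P_w k kA; apply: P_w;
  by rewrite ?mem_enum // -mem_enum.
elim: (enum A) => [|k s IH] /=; first exact: measurable_cst.
exact: measurable_and.
Qed.

Section PurchaseProbability.
Variables (R : realType) (d : measure_display) (Omega : measurableType d).
Variables (P : probability Omega R) (m : nat) (v : Omega -> 'I_m -> R).
Hypothesis v_meas : forall j, measurable_fun setT (fun w => v w j).

Lemma measurable_buys (q : pricing R m) S j :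
  measurable [set w | buys (v w) q S j].
Proof.
have m_util k : measurable_fun setT (fun w => (v w k)%:E - q k)%E.
  by apply: emeasurable_funB => //; exact/measurable_EFinP.
have m_buys : measurable_fun setT (fun w => buys (v w) q S j).
  apply: measurable_and => //.
  apply: measurable_and; first exact: measurable_fun_lee.
  apply: measurable_and; apply: measurable_fun_forall_in => k.
    exact: measurable_fun_lee.
  by case: (k < j)%N => /=; [exact: measurable_fun_lte | exact: measurable_cst].
by rewrite -[X in measurable X]setTI; exact: m_buys.
Qed.

Lemma xprob_ge0 (q : pricing R m) S j : 0 <= xprob P v q S j.
Proof. exact/fine_ge0/measure_ge0. Qed.

Lemma EFin_xprob (q : pricing R m) S j :
  (xprob P v q S j)%:E = P [set w | buys (v w) q S j].
Proof. by rewrite fineK // fin_num_measure //; exact: measurable_buys. Qed.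

Lemma le_xprob (q q' : pricing R m) S j :
  (forall w, buys (v w) q' S j -> buys (v w) q S j) ->
  xprob P v q' S j <= xprob P v q S j.
Proof.
move=> buys_q; rewrite -lee_fin !EFin_xprob.
by apply: le_measure; rewrite ?inE; [exact: measurable_buys..|move=> w /buys_q].
Qed.

Lemma xprob_eq0 (q : pricing R m) S j :
  (forall w, ~~ buys (v w) q S j) -> xprob P v q S j = 0.
Proof.
move=> never; rewrite /xprob [X in P X](_ : _ = set0) ?measure0 //.
by apply/seteqP; split=> w //=; rewrite (negbTE (never w)).
Qed.

Lemma Rev_sum_xprob (q : pricing R m) S : is_pricing q ->
  Rev P v q S = \sum_(j < m) fine (q j) * xprob P v q S j.
Proof.
move=> q_ge0; pose A j := [set w | buys (v w) q S j].
have payE w :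
    (payment (v w) q S)%:E = (\sum_(j < m) (fine (q j))%:E * (\1_(A j) w)%:E)%E.
  rewrite /payment -sumEFin; apply: eq_bigr => j _; rewrite indicE -EFinM.
  case: (boolP (buys (v w) q S j)) => [b|nb].
    by rewrite mem_set // mulr1.
  by rewrite memNset ?mulr0 //; exact/negP.
rewrite /Rev; under eq_integral => w _ do rewrite payE.
rewrite ge0_integral_sum //; last 2 first.
- move=> j; apply/measurable_funeM/measurable_EFinP.
  exact/measurable_indic/measurable_buys.
- by move=> j w _; rewrite mule_ge0 ?lee_fin ?fine_ge0.
rewrite -[RHS]/(fine (\sum_(j < m) fine (q j) * xprob P v q S j)%:E) -sumEFin.
congr fine; apply: eq_bigr => j _.
have mA : measurable (A j) by exact: measurable_buys.
rewrite ge0_integralZl_EFin ?fine_ge0 //; last first.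
  exact/measurable_EFinP/measurable_indic.
by rewrite integral_indic // setIT EFinM EFin_xprob.
Qed.

End PurchaseProbability.

Section RandomAvailability.
Variables (R : realType) (d : measure_display) (Omega : measurableType d).
Variables (P : probability Omega R) (m : nat) (v : Omega -> 'I_m -> R).
Hypothesis v_meas : forall j, measurable_fun setT (fun w => v w j).
Variables (muS : {ffun {set 'I_m} -> R}) (p : 'I_m -> R).
Hypothesis muS_ge0 : forall S, 0 <= muS S.
Hypothesis p_ge0 : forall j, 0 <= p j.

Definition expected_xprob (q : pricing R m) j :=
  \sum_(S : {set 'I_m}) muS S * xprob P v q S j.

Lemma expected_xprob_ge0 q j : 0 <= expected_xprob q j.
Proof. by apply: sumr_ge0 => S _; rewrite mulr_ge0 ?xprob_ge0. Qed.

Lemma xprob_restrict_notin (T S : {set 'I_m}) j :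
  j \notin T -> xprob P v (restrict_pricing p T) S j = 0.
Proof.
by move=> jNT; apply: xprob_eq0 => w; apply: contra jNT; exact: buys_restrict_mem.
Qed.

Lemma expected_xprob_restrict_notin (T : {set 'I_m}) j :
  j \notin T -> expected_xprob (restrict_pricing p T) j = 0.
Proof.
by move=> jNT; apply: big1 => S _; rewrite xprob_restrict_notin ?mulr0.
Qed.

Lemma le_expected_xprob_restrict (T T' : {set 'I_m}) j :
  T \subset T' -> j \in T ->
  expected_xprob (restrict_pricing p T') j
  <= expected_xprob (restrict_pricing p T) j.
Proof.
move=> sTT' jT; apply: ler_sum => S _; apply: ler_wpM2l => //.
by apply: le_xprob => // w; exact: buys_restrict_sub.
Qed.

Lemma expected_Rev_restrict (T : {set 'I_m}) :
  \sum_(S : {set 'I_m}) muS S * Rev P v (restrict_pricing p T) S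
  = \sum_(j < m) p j * expected_xprob (restrict_pricing p T) j.
Proof.
have RevE S : Rev P v (restrict_pricing p T) S
              = \sum_(j < m) p j * xprob P v (restrict_pricing p T) S j.
  rewrite (Rev_sum_xprob _ v_meas); last exact: is_pricing_restrict.
  apply: eq_bigr => j _.
  rewrite /restrict_pricing; case: ifPn => // jNT.
  by rewrite -/(restrict_pricing p T) xprob_restrict_notin ?mulr0.
under eq_bigr do rewrite RevE mulr_sumr.
rewrite exchange_big; apply: eq_bigr => j _; rewrite mulr_sumr.
by apply: eq_bigr => S _; rewrite mulrCA.
Qed.

End RandomAvailability.

Unset Implicit Arguments.

Theorem lemma1 (R : realType) (m : nat)
    (d : measure_display) (Omega : measurableType d) (P : probability Omega R)
    (v : Omega -> 'I_m -> R)
    (v_meas : forall j : 'I_m, measurable_fun setT (fun w => v w j))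
    (v_ge0 : forall w (j : 'I_m), 0 <= v w j)
    (p : 'I_m -> R) (p_ge0 : forall j, 0 <= p j)
    (muS : {ffun {set 'I_m} -> R})
    (muS_ge0 : forall S, 0 <= muS S) (muS_sum1 : \sum_(S : {set 'I_m}) muS S = 1)
    (y : 'I_m -> R)
    (y_ge0 : forall j, 0 <= y j) (y_sum : \sum_(j < m) y j <= 1)
    (y_le : forall j, y j <= \sum_(S : {set 'I_m})
                               muS S * xprob P v (fun i => (p i)%:E) S j) :
  exists (n : nat) (wq : 'I_n -> R) (q : 'I_n -> pricing R m),
    (forall i, 0 <= wq i) /\ \sum_(i < n) wq i = 1 /\
    (forall i, is_pricing (q i)) /\
    (forall j : 'I_m,
       \sum_(i < n) wq i * \sum_(S : {set 'I_m}) muS S * xprob P v (q i) S j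
       = y j) /\
    \sum_(i < n) wq i * \sum_(S : {set 'I_m}) muS S * Rev P v (q i) S
      = \sum_(j < m) y j * p j.
Proof.
pose f T := expected_xprob P v muS (restrict_pricing p T).
have [w [w_ge0 w_sum1 w_y]] : in_convex_hull f y.
  apply: (@dominated_in_convex_hull _ _ f _ _ _ [set: 'I_m]%SET)
    => [T j|T j|T T' j|j].
  - exact: expected_xprob_ge0.
  - exact: expected_xprob_restrict_notin.
  - exact: le_expected_xprob_restrict.
  - by rewrite /f restrict_pricingT y_ge0 y_le.
have reindex (F : {set 'I_m} -> R) :
    \sum_(i < #|{set 'I_m}|) F (enum_val i) = \sum_(T : {set 'I_m}) F T.
  by rewrite -big_enum_val.
exists #|{set 'I_m}|, (w \o enum_val), (restrict_pricing p \o enum_val).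
split=> [i|]; first exact: w_ge0.
split; first by rewrite reindex.
split=> [i|]; first exact: is_pricing_restrict.
split=> [j|]; first by rewrite -w_y -reindex.
transitivity (\sum_T w T * \sum_(j < m) p j * f T j).
  rewrite -reindex; apply: eq_bigr => i _ /=.
  by rewrite (expected_Rev_restrict P v_meas muS p_ge0).
under eq_bigr do rewrite mulr_sumr.
rewrite exchange_big; apply: eq_bigr => j _.
by rewrite -w_y mulr_suml; apply: eq_bigr => T _; rewrite mulrCA mulrC.
Qed.
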